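(* Let $l,m,k$ be non-negative integers with $2l\le m\le 2k$, and let $d$ be an integer with $0\le d\le k+l-m$. Then $$\sum_{i=0}^{k+l-m-d}P\big((0,0),(i,i+d)\big)\,P\big((i+l,i+d+m-l),(k,k)\big)=\binom{2k-m+1}{k-m+l-d}-\binom{2k-m+1}{k-m+l-d-1}.$$
   Context: A NE upper path is a lattice path in $\mathbb{Z}^2$ each of whose steps is either $(0,1)$ (North) or $(1,0)$ (East), and which never visits a point $(x,y)$ with $y<x$. For points $(x_1,y_1),(x_2,y_2)\in\mathbb{Z}^2$, $P((x_1,y_1),(x_2,y_2))$ denotes the number of NE upper paths from $(x_1,y_1)$ to $(x_2,y_2)$ (this is $0$ if no such path exists). Convention: $\binom{x}{y}=0$ for integers $x\ge 0$ and $y<0$. *)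

From mathcomp Require Import all_boot all_order all_algebra.
Set Implicit Arguments. Unset Strict Implicit. Unset Printing Implicit Defensive.
Import Order.TTheory GRing.Theory Num.Theory.
Local Open Scope ring_scope.

Definition point := (int * int)%type.

(* One step of a lattice path: true = North (0,1), false = East (1,0). *)
Definition step (p : point) (b : bool) : point :=
  if b then (p.1, p.2 + 1) else (p.1 + 1, p.2).

Definition visited (a : point) (w : seq bool) : seq point :=
  a :: scanl step a w.

Definition endpoint (a : point) (w : seq bool) : point := last a (scanl step a w).

Definition is_upper_path (a b : point) (w : seq bool) : bool :=
  all (fun p : point => p.1 <= p.2) (visited a w) && (endpoint a w == b).

(* Every such path has exactly
   (b.1 + b.2) - (a.1 + a.2) steps, so it suffices to count step words of
   that length (when that quantity is negative, no path can end at b,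
   and the count is 0 since endpoint checks fail). *)
Definition P (a b : point) : nat :=
  let n := absz ((b.1 + b.2) - (a.1 + a.2))%R in
  #|[set w : n.-tuple bool | is_upper_path a b w]|.

Definition binz (n : nat) (j : int) : int :=
  match j with
  | Posz j' => ('C(n, j'))%:Z
  | Negz _ => 0
  end.

From mathcomp Require Import all_boot all_order all_algebra.
From mathcomp Require Import zify.
Import Order.TTheory GRing.Theory Num.Theory.

(** Reading an upper path through the height [y - x] of its points, a North
    step goes up, an East step goes down, and the path becomes a walk on the
    nonnegative integers; so [P] counts such walks.  The [i]-th term of the
    sum counts the walks of length [2k - m + 1] from [0] to [2d + (m - 2l) + 1]
    whose last visit to height [d] happens at step [2i + d]: the first factor
    counts the part before that visit, the second (read backwards) the part
    after the following up-step, which stays above [d].  Summing over [i]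
    counts all such walks, and the ballot theorem evaluates their number as a
    difference of two binomial coefficients. *)

Fixpoint walks (n s t : nat) : nat :=
  match n with
  | 0 => (s == t : nat)
  | n'.+1 => walks n' s.+1 t + (if s is s'.+1 then walks n' s' t else 0)
  end.

Lemma walksS n s t :
  walks n.+1 s t = walks n s.+1 t + (if s is s'.+1 then walks n s' t else 0).
Proof. by []. Qed.

Lemma walksSr n s t :
  walks n.+1 s t = (if t is t'.+1 then walks n s t' else 0) + walks n s t.+1.
Proof.
elim: n s t => [|n IHn] s t.
  by case: s => [|s]; case: t => [|t] //=; rewrite ?eqSS ?addn0 ?addnC.
rewrite walksS (IHn s.+1); case: s => [|s]; rewrite ?(IHn s);
  case: t => [|t]; rewrite ?walksS /=; lia.
Qed.

Lemma walks_sym n s t : walks n s t = walks n t s.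
Proof.
elim: n s t => [|n IHn] s t; first by rewrite /= eq_sym.
rewrite walksS walksSr (IHn s.+1 t); case: s => [|s] /=; rewrite ?(IHn s t); lia.
Qed.

Lemma walks_out_of_reach n s t : n + s < t -> walks n s t = 0.
Proof.
elim: n s => [|n IHn] s lt_t /=; first by case: eqP => // eq_st; lia.
rewrite IHn; last lia.
by case: s lt_t => [|s] lt_t //; rewrite IHn //; lia.
Qed.

Lemma walks_odd n s t : odd (n + s + t) -> walks n s t = 0.
Proof.
elim: n s => [|n IHn] s odd_nst /=.
  by case: eqP => // eq_st; rewrite eq_st addnn odd_double in odd_nst.
rewrite IHn; last by rewrite addnS -addSn.
case: s odd_nst => [|s] odd_nst //; rewrite IHn //.
by move: odd_nst; rewrite !addSn !addnS !addSn /= negbK.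
Qed.

(* [j] is the time of the last visit to height [h]; the walk then steps up
   and stays above [h] until it ends at [h + e + 1]. *)
Lemma walks_last_visit N h e :
  walks N.+1 0 (h + e).+1 = \sum_(0 <= j < N.+1) walks j 0 h * walks (N - j) 0 e.
Proof.
elim: N e => [|N IHN] e.
  by rewrite big_nat1 /=; case: h => [|h]; case: e => [|e] //=; rewrite ?addn0 ?muln0.
rewrite walksSr big_nat_recr // subnn.
case: e => [|e].
  rewrite addn0 -[h.+2]/(h.+1).+1 -[h.+1]addn1 IHN.
  rewrite [in RHS](eq_big_nat _ _ (F2 := fun j => walks j 0 h * walks (N - j) 0 1)).
    by rewrite [walks 0 0 0]/= muln1 addnC.
  by move=> j /andP[_ lt_jN] /=; rewrite subSn // walksSr.
have -> : (h + e.+1).+2 = (h + e.+2).+1 by rewrite !addnS.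
rewrite [h + e.+1]addnS !IHN.
rewrite -big_split /= muln0 addn0.
apply: eq_big_nat => j /andP[_ lt_jN].
by rewrite subSn // walksSr mulnDr.
Qed.

(* Ballot theorem, stated additively to avoid truncated subtraction. *)
Lemma walks0_ballot n j t : j.*2 + t = n ->
  walks n 0 t + (if j is j'.+1 then 'C(n, j') else 0) = 'C(n, j).
Proof.
elim: n j t => [|n IHn] j t def_n; first by case: j def_n => [|j] //=; case: t.
rewrite walksSr.
case: j def_n => [|j] def_n.
  case: t def_n => [|t] def_n //=; rewrite /= in def_n.
  rewrite addn0 bin0 (@walks_out_of_reach n 0 t.+2); last lia.
  by have := IHn 0 t; rewrite addn0 bin0 => ->; lia.
rewrite doubleS in def_n.
case: t def_n => [|t] def_n.
  have {}def_n : n = j.*2.+1 by lia.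
  have := IHn j 1 ltac:(lia); rewrite add0n binS def_n.
  have -> : 'C(j.*2.+1, j.+1) = 'C(j.*2.+1, j).
    by rewrite -(@bin_sub j.*2.+1 j) -?addnn; [congr binomial | ]; lia.
  by case: j {def_n} => [|j] /=; rewrite ?bin0 ?binS; lia.
have IH1 := IHn j.+1 t ltac:(lia).
have IH2 := IHn j t.+2 ltac:(lia).
by rewrite binS; case: j {def_n} IH1 IH2 => [|j] /= IH1 IH2; rewrite ?bin0 ?binS; lia.
Qed.

Lemma sum_nat_shifted_evens (g : nat -> nat) d M N :
  (forall j, j < d -> g j = 0) -> (forall j, odd (j + d) -> g j = 0) ->
  (forall j, d + M.*2 < j <= N -> g j = 0) -> d + M.*2 <= N ->
  \sum_(0 <= j < N.+1) g j = \sum_(0 <= i < M.+1) g (i.*2 + d).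
Proof.
move=> g_lt g_odd g_gt le_N.
rewrite (@big_cat_nat _ _ _ (d + M.*2).+1) //= [X in _ + X]big1_seq ?addn0;
  last by move=> j; rewrite mem_index_iota => /andP[lt_j le_jN]; apply: g_gt; lia.
elim: M le_N {g_gt} => [|M IHM] le_N.
  rewrite big_nat1 addn0 big_nat_recr //= big1_seq ?add0n // => j.
  by rewrite mem_index_iota => /andP[_]; apply: g_lt.
rewrite doubleS !addnS big_nat_recr // big_nat_recr // IHM; last lia.
rewrite [in RHS]big_nat_recr //=.
rewrite [g (d + M.*2).+1]g_odd ?addn0; last first.
  by rewrite addSn /= addnC addnA addnn oddD !odd_double.
by congr (_ + g _); rewrite doubleS; lia.
Qed.

Local Open Scope ring_scope.

Lemma sum_tuple_cons n (f : n.+1.-tuple bool -> nat) :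
  (\sum_(w : n.+1.-tuple bool) f w =
   \sum_(w : n.-tuple bool) (f [tuple of true :: w] + f [tuple of false :: w]))%N.
Proof.
rewrite (reindex (fun p : bool * n.-tuple bool => [tuple of p.1 :: p.2])) /=.
  rewrite -(pair_big xpredT xpredT (fun b (w : n.-tuple bool) => f [tuple of b :: w])).
  by rewrite big_bool /= -big_split.
apply: onW_bij; exists (fun w : n.+1.-tuple bool => (thead w, behead_tuple w)).
  by move=> [b w] /=; congr pair; apply: val_inj.
by move=> w /=; rewrite -tuple_eta.
Qed.

Lemma is_upper_path_nil a b : is_upper_path a b [::] = (a.1 <= a.2) && (a == b).
Proof. by rewrite /is_upper_path /= andbT. Qed.

Lemma is_upper_path_cons a b x w :
  is_upper_path a b (x :: w) = (a.1 <= a.2) && is_upper_path (step a x) b w.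
Proof. by rewrite /is_upper_path /endpoint /= !andbA. Qed.

Definition upper_paths n (a b : point) : nat :=
  \sum_(w : n.-tuple bool) (is_upper_path a b w : nat).

Lemma card_upper_paths n (a b : point) :
  #|[set w : n.-tuple bool | is_upper_path a b w]| = upper_paths n a b.
Proof.
rewrite cardsE -sum1_card big_mkcond; apply: eq_bigr => w _ /=.
by rewrite unfold_in /is_upper_path /=; case: (_ && _).
Qed.

Lemma upper_paths0 (a b : point) :
  upper_paths 0 a b = (a.1 <= a.2) && (a == b) :> nat.
Proof.
rewrite /upper_paths (eq_bigr (fun _ => (is_upper_path a b [::] : nat))).
  by rewrite sum_nat_const card_tuple expn0 mul1n is_upper_path_nil.
by move=> w _; rewrite tuple0.
Qed.

Lemma upper_pathsS n (a : point) b : upper_paths n.+1 a b =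
  if a.1 <= a.2 then (upper_paths n (step a true) b + upper_paths n (step a false) b)%N
  else 0%N.
Proof.
rewrite /upper_paths sum_tuple_cons.
case: ifP => le_a; last by rewrite big1 // => w _; rewrite !is_upper_path_cons le_a.
by rewrite -big_split; apply: eq_bigr => w _; rewrite !is_upper_path_cons le_a.
Qed.

Lemma upper_pathsE n (a b : point) : upper_paths n a b =
  if [&& a.1 <= a.2, b.1 <= b.2 & b.1 + b.2 - (a.1 + a.2) == n%:Z]
  then walks n `|a.2 - a.1| `|b.2 - b.1| else 0%N.
Proof.
case: b => u v; elim: n a => [|n IHn] [x y].
  rewrite upper_paths0 /= xpair_eqE; case: (x <= y) / boolP => //= le_xy.
  have -> : (x == u) && (y == v) =
      [&& u <= v, u + v - (x + y) == 0 & `|(y - x)%R|%N == `|(v - u)%R|%N].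
    apply/andP/and3P => [[/eqP <- /eqP <-] | [le_uv /eqP level /eqP height]].
      by rewrite subrr !eqxx.
    by split; apply/eqP; lia.
  by case: (u <= v); case: (_ == 0).
rewrite upper_pathsS !IHn /=.
case: (x <= y) / boolP => le_xy; last by rewrite andFb.
have -> : (x <= y + 1) = true by lia.
have -> : (u + v - (x + (y + 1)) == n) = (u + v - (x + y) == n.+1) by apply/eqP/eqP; lia.
have -> : (u + v - (x + 1 + y) == n) = (u + v - (x + y) == n.+1) by apply/eqP/eqP; lia.
have -> : `|(y + 1 - x)%R|%N = (`|(y - x)%R|%N).+1 by lia.
case: ((u <= v) && _) => /=; last by rewrite andbF.
rewrite andbT; case E: `|(y - x)%R|%N => [|h].
  by have -> : (x + 1 <= y) = false by lia.
have -> : (x + 1 <= y) = true by lia.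
by have -> : `|(y - (x + 1))%R|%N = h by lia.
Qed.

Lemma P_walks (x y u v : nat) : (x <= y)%N -> (u <= v)%N -> (x + y <= u + v)%N ->
  P (x%:Z, y%:Z) (u%:Z, v%:Z) = walks (u + v - (x + y)) (y - x) (v - u).
Proof.
move=> le_xy le_uv le_level.
rewrite /P card_upper_paths upper_pathsE /= ifT; first by congr walks; lia.
by apply/and3P; split; lia.
Qed.

Lemma binz_pred n j :
  binz n (j%:Z - 1) = (if j is j'.+1 then 'C(n, j') else 0%N)%:Z.
Proof. by case: j => [|j] //; have -> : j.+1%:Z - 1 = j%:Z by lia. Qed.

Theorem mainTheorem5 (l m k d : nat) :
  (2 * l <= m)%N -> (m <= 2 * k)%N -> (d + m <= k + l)%N ->
  \sum_(0 <= i < (k + l - m - d).+1)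
     ((P (0, 0) (i%:Z, (i + d)%:Z))%:Z *
      (P ((i + l)%:Z, (i + d + m)%:Z - l%:Z) (k%:Z, k%:Z))%:Z)
  = binz (2 * k - m + 1) ((k + l - m - d)%N%:Z)
    - binz (2 * k - m + 1) ((k + l - m - d)%N%:Z - 1).
Proof.
move=> le_2l_m le_m_2k le_dm_kl.
set M := (k + l - m - d)%N; set N := (2 * k - m)%N; set a := (m - 2 * l)%N.
pose g j := (walks j 0 d * walks (N - j) 0 (d + a))%N.
have termE i : (i < M.+1)%N ->
    (P (0, 0) (i%:Z, (i + d)%:Z))%:Z * (P ((i + l)%:Z, (i + d + m)%:Z - l%:Z) (k%:Z, k%:Z))%:Z
    = (g (i.*2 + d))%:Z.
  move=> lt_iM; have -> : (i + d + m)%:Z - l%:Z = (i + d + m - l)%N%:Z by lia.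
  rewrite !P_walks; [|lia..].
  rewrite (walks_sym _ _ (k - k)) -PoszM /g.
  by congr (Posz (walks _ _ _ * walks _ _ _)); lia.
rewrite (eq_big_nat _ _ (F2 := fun i => (g (i.*2 + d))%:Z)); last first.
  by move=> i /andP[_]; apply: termE.
rewrite -(big_morph Posz PoszD (erefl (Posz 0))).
rewrite -(@sum_nat_shifted_evens g d M N); first last.
- lia.
- by move=> j /andP[? ?]; rewrite /g (@walks_out_of_reach (N - j)) ?muln0 //; lia.
- by move=> j odd_jd; rewrite /g walks_odd ?addn0.
- by move=> j lt_jd; rewrite /g walks_out_of_reach // addn0.
rewrite -walks_last_visit binz_pred.
have := @walks0_ballot (N + 1) M (d + (d + a)).+1 ltac:(rewrite -addnn; lia).
by rewrite /binz !addn1 => <-; rewrite PoszD addrK.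
Qed.
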